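(* Let $\mathbf B^{(1)}\in\mathbb Q^{d\times n}$ be an LLL-reduced basis and $\gamma\ge2$. Then $\mathbf B^{(2)}=(\mathbf b_1^{(2)},\dots,\mathbf b_n^{(2)}):=A_{\mathbf B^{(1)},\gamma}\mathbf B^{(1)}$ is LLL-reduced, and for all $i$, \[ \|\mathbf b_1^{(2)}\|/2^n\le\|\tilde{\mathbf b}_i^{(2)}\|\le\|\mathbf b_i^{(2)}\|\le(2\gamma)^i\|\mathbf b_1^{(2)}\|. \]
   Context: Gram–Schmidt orthogonalization of a basis $\mathbf B=(\mathbf b_1,\dots,\mathbf b_n)$: $\tilde{\mathbf b}_1=\mathbf b_1$, $\tilde{\mathbf b}_i=\Pi_{\{\mathbf b_1,\dots,\mathbf b_{i-1}\}^\perp}(\mathbf b_i)$; $\mu_{i,j}:=\langle\tilde{\mathbf b}_i,\mathbf b_j\rangle/\|\tilde{\mathbf b}_i\|^2$. $\mathbf B$ is LLL-reduced if $|\mu_{i,j}|\le 1/2$ for all $i<j$ and $\tfrac34\|\tilde{\mathbf b}_i\|^2\le\|\tilde{\mathbf b}_{i+1}\|^2+\mu_{i,i+1}^2\|\tilde{\mathbf b}_i\|^2$ for $1\le i\le n-1$. For a basis $\mathbf B$ and $\gamma\ge1$: $\alpha_1=1$, $\alpha_i=\max\{\alpha_{i-1},\lceil\|\tilde{\mathbf b}_i\|/(\gamma^i\|\mathbf b_1\|)\rceil\}$, and $A_{\mathbf B,\gamma}$ is the unique linear map with $A_{\mathbf B,\gamma}\tilde{\mathbf b}_i=\tilde{\mathbf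 b}_i/\alpha_i$ for all $i$ and identity on $\{\mathbf b_1,\dots,\mathbf b_n\}^\perp$. *)

From HB Require Import structures.
From mathcomp Require Import all_boot all_order all_algebra.
From mathcomp Require Import reals.
Set Implicit Arguments. Unset Strict Implicit. Unset Printing Implicit Defensive.
Import Order.TTheory GRing.Theory Num.Theory.
Local Open Scope ring_scope.

Section LLLDefs.
Variable R : realType.

Definition dotv d (u v : 'cV[R]_d) : R := \sum_(i < d) u i 0 * v i 0.
Definition normv d (u : 'cV[R]_d) : R := Num.sqrt (dotv u u).

(* the basis vectors b_1,...,b_n are the columns of B : 'M_(d,n);
   the paper's index i (1-based) is the ordinal j : 'I_n with i = j+1 *)
Definition cols d n (B : 'M[R]_(d, n)) : seq 'cV[R]_d :=
  [seq col j B | j <- enum 'I_n].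

Fixpoint gs_aux d (acc s : seq 'cV[R]_d) : seq 'cV[R]_d :=
  match s with
  | [::] => acc
  | x :: s' =>
      gs_aux (rcons acc (x - \sum_(v <- acc) (dotv x v / dotv v v) *: v)) s'
  end.

Definition gso d n (B : 'M[R]_(d, n)) (j : 'I_n) : 'cV[R]_d :=
  nth 0 (gs_aux [::] (cols B)) j.

Definition gs_mu d n (B : 'M[R]_(d, n)) (i j : 'I_n) : R :=
  dotv (gso B i) (col j B) / dotv (gso B i) (gso B i).

Definition LLL_reduced d n (B : 'M[R]_(d, n)) : Prop :=
  (forall i j : 'I_n, (i < j)%N -> `|gs_mu B i j| <= 1/2) /\
  (forall i j : 'I_n, j = i.+1 :> nat ->
     3/4 * normv (gso B i) ^+ 2
       <= normv (gso B j) ^+ 2 + gs_mu B i j ^+ 2 * normv (gso B i) ^+ 2).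

(* alpha_1 = 1,
   alpha_i = max(alpha_{i-1}, ceil(||bt_i|| / (gamma^i ||b_1||))),
   here alpha_nat k = alpha_{k+1} (0-based k). *)
Fixpoint alpha_nat d n (B : 'M[R]_(d, n)) (gamma : R) (k : nat) : R :=
  match k with
  | 0 => 1
  | k'.+1 =>
      Num.max (alpha_nat B gamma k')
        (Num.ceil (normv (nth 0 (gs_aux [::] (cols B)) k) /
                   (gamma ^+ k.+1 * normv (nth 0 (cols B) 0))))%:~R
  end.

Definition alpha d n (B : 'M[R]_(d, n)) (gamma : R) (j : 'I_n) : R :=
  alpha_nat B gamma j.

Definition is_A_map d n (B : 'M[R]_(d, n)) (gamma : R) (A : 'M[R]_d) : Prop :=
  (forall j : 'I_n, A *m gso B j = (alpha B gamma j)^-1 *: gso B j) /\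
  (forall x : 'cV[R]_d, (forall j : 'I_n, dotv x (col j B) = 0) -> A *m x = x).

End LLLDefs.

(* Since A maps bt_i to bt_i / alpha_i, the Gram--Schmidt vectors of A B are
   c_i = bt_i / alpha_i, with the same coefficients mu_(i,j); so size reduction is
   preserved. For the Lovasz condition at i, either alpha_(i+1) = alpha_i and the old
   condition is merely rescaled, or alpha_(i+1) = ceil x >= 2 with
   x = |bt_(i+1)| / (gamma^(i+1) |b_1|), whence
   |c_(i+1)| = gamma^(i+1) |b_1| x / ceil x >= gamma^(i+1) |b_1| / 2
             >= gamma^i |b_1| >= |c_i|.
   The bounds are then the usual LLL estimates: |c_1|^2 <= 2^(i-1) |c_i|^2, and
   |b_i|^2 <= (1 + (i-1)/4) max_(k<=i) |c_k|^2 <= 4^i (gamma^i |b_1|)^2. *)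

From HB Require Import structures.
From mathcomp Require Import all_boot all_order all_algebra.
From mathcomp Require Import reals.
From mathcomp Require Import ring lra zify.
Set Implicit Arguments. Unset Strict Implicit. Unset Printing Implicit Defensive.
Import Order.TTheory GRing.Theory Num.Theory.
Local Open Scope ring_scope.

Section InnerProduct.
Variables (R : realType) (d : nat).
Implicit Types u v w : 'cV[R]_d.

Lemma dotvC u v : dotv u v = dotv v u.
Proof. by apply: eq_bigr => i _; rewrite mulrC. Qed.

Lemma dotvDl u v w : dotv (u + v) w = dotv u w + dotv v w.
Proof. by rewrite /dotv -big_split; apply: eq_bigr => i _; rewrite mxE mulrDl. Qed.

Lemma dotvZl a u v : dotv (a *: u) v = a * dotv u v.
Proof. by rewrite /dotv mulr_sumr; apply: eq_bigr => i _; rewrite mxE mulrA. Qed.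

Lemma dotvBl u v w : dotv (u - v) w = dotv u w - dotv v w.
Proof. by rewrite dotvDl -scaleN1r dotvZl mulN1r. Qed.

Lemma dotv0l v : dotv 0 v = 0.
Proof. by rewrite -(scale0r 0) dotvZl mul0r. Qed.

Lemma dotv_suml I (r : seq I) (P : pred I) (F : I -> 'cV[R]_d) v :
  dotv (\sum_(i <- r | P i) F i) v = \sum_(i <- r | P i) dotv (F i) v.
Proof. by elim/big_rec2: _ => [|i x y _ <-]; rewrite ?dotv0l ?dotvDl. Qed.

Lemma dotvDr u v w : dotv w (u + v) = dotv w u + dotv w v.
Proof. by rewrite dotvC dotvDl !(dotvC w). Qed.

Lemma dotvZr a u v : dotv v (a *: u) = a * dotv v u.
Proof. by rewrite dotvC dotvZl dotvC. Qed.

Lemma dotvBr u v w : dotv w (u - v) = dotv w u - dotv w v.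
Proof. by rewrite dotvC dotvBl !(dotvC w). Qed.

Lemma dotv_sumr I (r : seq I) (P : pred I) (F : I -> 'cV[R]_d) v :
  dotv v (\sum_(i <- r | P i) F i) = \sum_(i <- r | P i) dotv v (F i).
Proof. by rewrite dotvC dotv_suml; apply: eq_bigr => i _; rewrite dotvC. Qed.

Lemma dotvv_ge0 u : 0 <= dotv u u.
Proof. by apply: sumr_ge0 => i _; rewrite -expr2 sqr_ge0. Qed.

Lemma dotvv_eq0 u : (dotv u u == 0) = (u == 0).
Proof.
apply/eqP/eqP => [uu0|->]; last exact: dotv0l.
apply/matrixP => i k; rewrite mxE ord1.
have sq_ge0 j : xpredT j -> 0 <= u j 0 * u j 0 by rewrite -expr2 sqr_ge0.
by have /eqP := psumr_eq0P sq_ge0 uu0 (i := i) erefl; rewrite mulf_eq0 orbb => /eqP.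
Qed.

Lemma normv_ge0 u : 0 <= normv u.
Proof. exact: sqrtr_ge0. Qed.

Lemma sqr_normv u : normv u ^+ 2 = dotv u u.
Proof. by rewrite sqr_sqrtr // dotvv_ge0. Qed.

Lemma normv_le u v : (normv u <= normv v) = (dotv u u <= dotv v v).
Proof. by rewrite -!sqr_normv ler_pXn2r ?nnegrE ?normv_ge0. Qed.

Lemma normv_eq0 u : (normv u == 0) = (u == 0).
Proof. by rewrite -sqrf_eq0 sqr_normv dotvv_eq0. Qed.

Lemma normv_gt0 u : (0 < normv u) = (u != 0).
Proof. by rewrite lt_def normv_ge0 normv_eq0 andbT. Qed.

Lemma normv_le_sqr u M : 0 <= M -> (normv u <= M) = (dotv u u <= M ^+ 2).
Proof. by move=> M_ge0; rewrite -sqr_normv ler_pXn2r ?nnegrE ?normv_ge0. Qed.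

Lemma normvZ a u : normv (a *: u) = `|a| * normv u.
Proof.
rewrite /normv dotvZl dotvZr mulrA -expr2 sqrtrM ?sqr_ge0 //.
by rewrite sqrtr_sqr.
Qed.

End InnerProduct.

Section Orthogonal.
Variables (R : realType) (d : nat).

Definition orth_upto (m : nat) (c : nat -> 'cV[R]_d) :=
  forall k l, (k < m)%N -> (l < m)%N -> k != l -> dotv (c k) (c l) = 0.

Variables (m : nat) (c : nat -> 'cV[R]_d).
Hypothesis c_orth : orth_upto m c.

Lemma dotv_orth_sumr (a : nat -> R) l j : (l < m)%N -> (j <= m)%N ->
  dotv (c l) (\sum_(k < j) a k *: c k) = if (l < j)%N then a l * dotv (c l) (c l) else 0.
Proof.
move=> lm jm; rewrite dotv_sumr.
have ck_orth (k : 'I_j) : val k != l -> dotv (c l) (a k *: c k) = 0.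
  by move=> kl; rewrite dotvZr c_orth ?mulr0 ?(leq_trans (ltn_ord k)) // eq_sym.
case: ifP => lj; last first.
  by rewrite big1 // => k _; apply: ck_orth; apply: contraFneq lj => <-; exact: ltn_ord.
rewrite (bigD1 (Ordinal lj)) //= big1 => [|k kl]; first by rewrite addr0 dotvZr.
by apply: ck_orth; apply: contraNneq kl => kl; apply/eqP/val_inj.
Qed.

Lemma dotv_orth_expansion (a : nat -> R) j : (j < m)%N ->
  dotv (c j + \sum_(i < j) a i *: c i) (c j + \sum_(i < j) a i *: c i) =
  dotv (c j) (c j) + \sum_(i < j) a i ^+ 2 * dotv (c i) (c i).
Proof.
move=> jm.
rewrite dotvDl dotv_suml dotvDr (dotv_orth_sumr _ jm (ltnW jm)) ltnn addr0.
congr (_ + _); apply: eq_bigr => i _.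
have im : (i < m)%N := ltn_trans (ltn_ord i) jm.
rewrite dotvZl dotvDr (dotv_orth_sumr _ im (ltnW jm)) ltn_ord.
by rewrite c_orth ?(ltn_eqF (ltn_ord i)) // add0r mulrA expr2.
Qed.

End Orthogonal.

Section GramSchmidt.
Variables (R : realType) (d : nat).

Lemma gs_aux_rcons (acc s : seq 'cV[R]_d) x :
  gs_aux acc (rcons s x) =
  rcons (gs_aux acc s) (x - \sum_(v <- gs_aux acc s) (dotv x v / dotv v v) *: v).
Proof. by elim: s acc => [|y s IH] acc //=. Qed.

Lemma size_gs_aux (acc s : seq 'cV[R]_d) : size (gs_aux acc s) = (size acc + size s)%N.
Proof. by elim: s acc => [|y s IH] acc /=; rewrite ?addn0 // IH size_rcons addSnnS. Qed.

Lemma gs_aux_cat (acc s t : seq 'cV[R]_d) :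
  exists t', gs_aux acc (s ++ t) = gs_aux acc s ++ t'.
Proof.
elim/last_ind: t => [|t x [t' IH]]; first by exists [::]; rewrite !cats0.
exists (rcons t' (x - \sum_(v <- gs_aux acc (s ++ t)) (dotv x v / dotv v v) *: v)).
by rewrite -rcons_cat gs_aux_rcons IH rcons_cat.
Qed.

Lemma nth_gs_aux (s : seq 'cV[R]_d) j : (j < size s)%N ->
  let g i := nth 0 (gs_aux [::] s) i in
  g j = nth 0 s j - \sum_(i < j) (dotv (nth 0 s j) (g i) / dotv (g i) (g i)) *: g i.
Proof.
move=> js g.
have [t1 E1] := gs_aux_cat [::] (take j.+1 s) (drop j.+1 s).
have [t2 E2] := gs_aux_cat [::] (take j s) (drop j s).
rewrite !cat_take_drop in E1 E2.
have size_gs_take : size (gs_aux [::] (take j s)) = j.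
  by rewrite size_gs_aux /= size_takel // ltnW.
have gs_take : gs_aux [::] (take j s) = mkseq g j.
  apply: (@eq_from_nth _ 0); first by rewrite size_mkseq.
  move=> i; rewrite size_gs_take => ij.
  by rewrite nth_mkseq // /g E2 nth_cat size_gs_take ij.
rewrite {1}/g E1 (take_nth 0 js) gs_aux_rcons nth_cat size_rcons size_gs_take ltnSn.
rewrite nth_rcons size_gs_take ltnn eqxx gs_take /mkseq big_map -/g.
by rewrite -[j in iota 0 j]subn0 -/(index_iota 0 j) big_mkord.
Qed.

Variable n : nat.
Implicit Types B : 'M[R]_(d, n).

Definition colv B k := nth 0 (cols B) k.
Definition gsov B k := nth 0 (gs_aux [::] (cols B)) k.
Definition gsmu B i j := dotv (gsov B i) (colv B j) / dotv (gsov B i) (gsov B i).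

Lemma size_cols B : size (cols B) = n.
Proof. by rewrite size_map size_enum_ord. Qed.

Lemma colvE B (j : 'I_n) : colv B j = col j B.
Proof. by rewrite /colv (nth_map j) ?size_enum_ord // nth_ord_enum. Qed.

Lemma gs_muE B (i j : 'I_n) : gs_mu B i j = gsmu B i j.
Proof. by rewrite /gs_mu /gsmu colvE. Qed.

Lemma colv_mulmx (A : 'M[R]_d) B j : (j < n)%N -> colv (A *m B) j = A *m colv B j.
Proof. by move=> jn; rewrite -[j]/(val (Ordinal jn)) !colvE !colE mulmxA. Qed.

Section Basis.
Variable B : 'M[R]_(d, n).
Local Notation b := (colv B).
Local Notation g := (gsov B).

Lemma gsov_rec j : (j < n)%N ->
  g j = b j - \sum_(i < j) (dotv (b j) (g i) / dotv (g i) (g i)) *: g i.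
Proof. by move=> jn; apply: nth_gs_aux; rewrite size_cols. Qed.

Lemma gsov0 : (0 < n)%N -> g 0 = b 0.
Proof. by move=> n0; rewrite gsov_rec // big_ord0 subr0. Qed.

Lemma colv_expansion j : (j < n)%N -> b j = g j + \sum_(i < j) gsmu B i j *: g i.
Proof.
move=> jn; rewrite [g j]gsov_rec //.
under [X in _ = _ + X]eq_bigr => i _ do rewrite /gsmu dotvC.
by rewrite subrK.
Qed.

Lemma gsov_orth : orth_upto n g.
Proof.
suff lt_orth j i : (i < j)%N -> (j < n)%N -> dotv (g i) (g j) = 0.
  move=> k l kn ln; case: ltngtP => // [kl|lk] _; first exact: lt_orth.
  by rewrite dotvC lt_orth.
elim/ltn_ind: j i => j IH i ij jn.
rewrite [g j]gsov_rec // dotvBr dotv_sumr (bigD1 (Ordinal ij)) //= big1 => [|k ki].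
  rewrite addr0 dotvZr (dotvC (b j)).
  have [/eqP|gi_neq0] := eqVneq (dotv (g i) (g i)) 0.
    by rewrite dotvv_eq0 => /eqP ->; rewrite dotv0l mul0r mul0r subrr.
  by rewrite mulfVK // subrr.
have kj := ltn_ord k; rewrite dotvZr.
have [ik|ki'|ik] := ltngtP i k.
- by rewrite (IH k kj i ik (ltn_trans kj jn)) mulr0.
- by rewrite (dotvC (g i)) (IH i ij k ki' (ltn_trans ij jn)) mulr0.
- by move: ki; rewrite -val_eqE /= ik eqxx.
Qed.

Lemma gsov_unique (c : nat -> 'cV[R]_d) (a : nat -> nat -> R) :
  orth_upto n c -> (forall j, (j < n)%N -> b j = c j + \sum_(i < j) a j i *: c i) ->
  forall j, (j < n)%N -> g j = c j.
Proof.
move=> c_orth b_exp; elim/ltn_ind => j IH jn.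
rewrite gsov_rec //.
suff -> : \sum_(i < j) (dotv (b j) (g i) / dotv (g i) (g i)) *: g i =
          \sum_(i < j) a j i *: c i by rewrite b_exp // addrK.
apply: eq_bigr => i _.
have im : (i < n)%N := ltn_trans (ltn_ord i) jn.
rewrite IH ?ltn_ord // b_exp // dotvDl (dotvC _ (c i)) c_orth ?(ltn_eqF (ltn_ord i)) //.
rewrite add0r dotvC (dotv_orth_sumr c_orth _ im (ltnW jn)) ltn_ord.
have [/eqP|ci_neq0] := eqVneq (dotv (c i) (c i)) 0.
  by rewrite dotvv_eq0 => /eqP ->; rewrite !scaler0.
by rewrite mulfK.
Qed.

Lemma sqr_normv_colv j : (j < n)%N ->
  dotv (b j) (b j) = dotv (g j) (g j) + \sum_(i < j) gsmu B i j ^+ 2 * dotv (g i) (g i).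
Proof.
by move=> jn; rewrite colv_expansion // (dotv_orth_expansion gsov_orth (gsmu B ^~ j)).
Qed.

Lemma normv_gsov_le j : (j < n)%N -> normv (g j) <= normv (b j).
Proof.
move=> jn; rewrite normv_le sqr_normv_colv // lerDl.
by apply: sumr_ge0 => i _; rewrite mulr_ge0 ?sqr_ge0 ?dotvv_ge0.
Qed.

End Basis.
End GramSchmidt.

Section ScaledGramSchmidt.
Variables (R : realType) (d n : nat) (B : 'M[R]_(d, n)) (A : 'M[R]_d) (w : nat -> R).
Hypothesis A_gsov : forall k, (k < n)%N -> A *m gsov B k = w k *: gsov B k.
Local Notation c k := (w k *: gsov B k).

Lemma scaled_gsov_orth : orth_upto n (fun k => c k).
Proof. by move=> k l kn ln kl; rewrite dotvZl dotvZr gsov_orth ?mulr0. Qed.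

Lemma colv_mulmx_expansion j : (j < n)%N ->
  colv (A *m B) j = c j + \sum_(i < j) gsmu B i j *: c i.
Proof.
move=> jn; rewrite colv_mulmx // colv_expansion // mulmxDr A_gsov // mulmx_sumr.
congr (_ + _); apply: eq_bigr => i _.
by rewrite -scalemxAr A_gsov // (ltn_trans (ltn_ord i)).
Qed.

Lemma gsov_mulmx j : (j < n)%N -> gsov (A *m B) j = c j.
Proof.
exact: (gsov_unique scaled_gsov_orth (a := fun j i => gsmu B i j) colv_mulmx_expansion).
Qed.

Lemma gsmu_mulmx i j : (i < j)%N -> (j < n)%N -> w i != 0 ->
  gsmu (A *m B) i j = gsmu B i j.
Proof.
move=> ij jn wi_neq0; have im := ltn_trans ij jn.
rewrite /gsmu gsov_mulmx // colv_mulmx_expansion // dotvDr.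
rewrite scaled_gsov_orth ?(ltn_eqF ij) // add0r.
rewrite (dotv_orth_sumr scaled_gsov_orth (gsmu B ^~ j) im (ltnW jn)) ij.
have [/eqP|gi_neq0] := eqVneq (dotv (gsov B i) (gsov B i)) 0.
  by rewrite dotvv_eq0 => /eqP ->; rewrite /gsmu !(scaler0, dotv0l, mul0r, mulr0).
by rewrite mulfK // dotvZl dotvZr !mulf_neq0.
Qed.

End ScaledGramSchmidt.

Section LLLReduced.
Variables (R : realType) (d n : nat).
Local Notation D B k := (dotv (gsov B k) (gsov B k)).

Lemma LLL_reducedE (B : 'M[R]_(d, n)) : LLL_reduced B <->
  (forall i j, (i < j)%N -> (j < n)%N -> `|gsmu B i j| <= 1/2) /\
  (forall k, (k.+1 < n)%N -> 3/4 * D B k <= D B k.+1 + gsmu B k k.+1 ^+ 2 * D B k).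
Proof.
split=> [[size_red lovasz]|[size_red lovasz]]; split.
- move=> i j ij jn; rewrite -(gs_muE B (Ordinal (ltn_trans ij jn)) (Ordinal jn)).
  exact: size_red.
- move=> k kn; rewrite -(gs_muE B (Ordinal (ltnW kn)) (Ordinal kn)) -!sqr_normv.
  exact: (lovasz (Ordinal (ltnW kn)) (Ordinal kn)).
- by move=> i j ij; rewrite gs_muE; apply: size_red.
- move=> i j /= ji; rewrite gs_muE !sqr_normv.
  by have := lovasz i; rewrite -ji => /(_ (ltn_ord j)).
Qed.

Lemma sqr_le_quarter (x : R) : `|x| <= 1/2 -> x ^+ 2 <= 1/4.
Proof.
move=> x_le; rewrite -real_normK ?num_real // [1/4](_ : _ = (1/2) ^+ 2); last first.
  by rewrite expr2; field.
by rewrite lerXn2r ?nnegrE // divr_ge0 ?ler0n.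
Qed.

Variable B : 'M[R]_(d, n).
Hypothesis B_LLL : LLL_reduced B.
Local Notation g := (gsov B).

Lemma LLL_gsov_step k : (k.+1 < n)%N -> D B k <= 2 * D B k.+1.
Proof.
move=> kn; have [size_red lovasz] := (LLL_reducedE B).1 B_LLL.
have mu_sq := ler_wpM2r (dotvv_ge0 (g k)) (sqr_le_quarter (size_red _ _ (ltnSn k) kn)).
by have := lovasz k kn; lra.
Qed.

Lemma LLL_gsov_chain k : (k < n)%N -> D B 0 <= 2 ^+ k * D B k.
Proof.
elim: k => [|k IH] kn; first by rewrite mul1r.
apply: le_trans (IH (ltnW kn)) _; rewrite exprSr -mulrA.
by rewrite ler_wpM2l ?exprn_ge0 // LLL_gsov_step.
Qed.

Lemma LLL_normv_gsov_ge k : (k < n)%N -> normv (colv B 0) / 2 ^+ n <= normv (g k).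
Proof.
move=> kn; rewrite ler_pdivrMr ?exprn_gt0 // -gsov0 ?(leq_ltn_trans _ kn) //.
rewrite normv_le_sqr ?mulr_ge0 ?normv_ge0 ?exprn_ge0 //.
apply: le_trans (LLL_gsov_chain kn) _.
rewrite exprMn sqr_normv [leRHS]mulrC ler_wpM2r ?dotvv_ge0 // -exprM ler_eXn2l ?ltr1n //.
by rewrite (leq_trans (ltnW kn)) // muln2 -addnn leq_addr.
Qed.

Lemma LLL_normv_colv_le k M : (k < n)%N ->
  (forall l, (l <= k)%N -> normv (g l) <= M) -> normv (colv B k) <= 2 ^+ k.+1 * M.
Proof.
move=> kn gM; have M_ge0 : 0 <= M := le_trans (normv_ge0 _) (gM k (leqnn k)).
have [size_red _] := (LLL_reducedE B).1 B_LLL.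
have D_le l : (l <= k)%N -> D B l <= M ^+ 2 by move=> lk; rewrite -normv_le_sqr ?gM.
rewrite normv_le_sqr ?mulr_ge0 ?exprn_ge0 // sqr_normv_colv //.
have sum_le : \sum_(i < k) gsmu B i k ^+ 2 * D B i <= M ^+ 2 *+ k.
  rewrite -[in leRHS](card_ord k) -sumr_const; apply: ler_sum => i _.
  have mu_sq := sqr_le_quarter (size_red _ _ (ltn_ord i) kn).
  have := ler_wpM2r (dotvv_ge0 (g i)) mu_sq.
  have := D_le i (ltnW (ltn_ord i)); have := dotvv_ge0 (g i); lra.
apply: le_trans (lerD (D_le k (leqnn k)) sum_le) _.
rewrite -mulrS -[_ *+ k.+1]mulr_natl exprMn -exprM mulnC exprM ler_wpM2r ?sqr_ge0 //.
by rewrite -!natrX ler_nat ltnW // ltn_expl.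
Qed.

End LLLReduced.

Lemma ceil_le_double (R : realType) (x : R) : 1 < Num.ceil x -> (Num.ceil x)%:~R <= 2 * x.
Proof.
move=> ceil_gt1; have ceil_ge2 : (2 : int) <= Num.ceil x by lia.
have : (2 : R) <= (Num.ceil x)%:~R by rewrite -[2 : R]/((2 : int)%:~R) ler_int.
by have := ceilB1_lt x; rewrite intrB; lra.
Qed.

Lemma alpha_nat_ge1 (R : realType) d n (B : 'M[R]_(d, n)) gamma k :
  1 <= alpha_nat B gamma k.
Proof. by elim: k => [|k IH] //=; rewrite le_max IH. Qed.

Section Rescaling.
Variables (R : realType) (d n : nat) (B : 'M[R]_(d, n)) (gamma : R) (A : 'M[R]_d).
Hypothesis b0_neq0 : colv B 0 != 0.
Hypothesis gamma_ge2 : 2 <= gamma.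
Hypothesis A_rescales : is_A_map B gamma A.
Local Notation a k := (alpha_nat B gamma k).
Local Notation g := (gsov B).
Local Notation c k := ((a k)^-1 *: g k).
Local Notation G k := (gamma ^+ k.+1 * normv (colv B 0)).

Lemma alpha_nat_gt0 k : 0 < a k.
Proof. exact: lt_le_trans ltr01 (alpha_nat_ge1 B gamma k). Qed.

Lemma normv_rescaled k : normv (c k) = (a k)^-1 * normv (g k).
Proof. by rewrite normvZ ger0_norm // invr_ge0 ltW // alpha_nat_gt0. Qed.

Lemma gamma_bound_gt0 k : 0 < G k.
Proof.
by rewrite mulr_gt0 ?exprn_gt0 ?normv_gt0 ?(lt_le_trans _ gamma_ge2).
Qed.

Lemma normv_rescaled_le k : (k < n)%N -> normv (c k) <= G k.
Proof.
case: k => [|k] kn.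
  rewrite /= invr1 scale1r gsov0 // expr1; apply: ler_peMl; first exact: normv_ge0.
  by rewrite (le_trans _ gamma_ge2) ?ler1n.
have x_le_a : normv (g k.+1) / G k.+1 <= a k.+1 by rewrite /= le_max ceil_ge orbT.
by rewrite normv_rescaled ler_pdivrMl ?alpha_nat_gt0 // -ler_pdivrMr ?gamma_bound_gt0.
Qed.

Lemma normv_rescaled_jump k : (k.+1 < n)%N -> a k.+1 != a k ->
  normv (c k) <= normv (c k.+1).
Proof.
move=> kn jump; set x := normv (g k.+1) / G k.+1.
have [ak_lt a_eq] : a k < (Num.ceil x)%:~R /\ a k.+1 = (Num.ceil x)%:~R.
  move: jump; rewrite [a k.+1]/= maxEle; case: ifP => [ak_le ak_neq|_]; last first.
    by rewrite eqxx.
  by rewrite lt_neqAle eq_sym ak_neq ak_le.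
have ceil_gt1 : 1 < Num.ceil x.
  by rewrite -(ltr1z R); exact: le_lt_trans (alpha_nat_ge1 B gamma k) ak_lt.
have ceil_le := ceil_le_double ceil_gt1.
have Gk := gamma_bound_gt0 k.
have g_eq : normv (g k.+1) = x * (gamma * G k).
  by rewrite /x [gamma * _]mulrA -exprS divfK // gt_eqF // gamma_bound_gt0.
apply: le_trans (normv_rescaled_le (ltnW kn)) _.
rewrite normv_rescaled a_eq g_eq ler_pdivlMl ?(lt_trans ltr01) ?ltr1z //.
have x_ge0 : 0 <= x by rewrite divr_ge0 ?normv_ge0 ?ltW ?gamma_bound_gt0.
have := ler_wpM2r (ltW Gk) (ler_wpM2r x_ge0 gamma_ge2).
have := ler_wpM2r (ltW Gk) ceil_le; nra.
Qed.

Lemma A_rescales_gsov k : (k < n)%N -> A *m g k = (a k)^-1 *: g k.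
Proof. by move=> kn; apply: (A_rescales.1 (Ordinal kn)). Qed.

Lemma colv_rescaled0 : (0 < n)%N -> colv (A *m B) 0 = colv B 0.
Proof.
move=> n0; rewrite (colv_mulmx_expansion A_rescales_gsov) // big_ord0 addr0.
by rewrite invr1 scale1r gsov0.
Qed.

Lemma LLL_reduced_rescaled : LLL_reduced B -> LLL_reduced (A *m B).
Proof.
move=> /LLL_reducedE [size_red lovasz]; apply/LLL_reducedE; split.
  move=> i j ij jn.
  by rewrite (gsmu_mulmx A_rescales_gsov) ?invr_neq0 ?gt_eqF ?alpha_nat_gt0 ?size_red.
move=> k kn; have kn' := ltnW kn.
rewrite !(gsov_mulmx A_rescales_gsov) // (gsmu_mulmx A_rescales_gsov) //;
  last by rewrite invr_neq0 // gt_eqF ?alpha_nat_gt0.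
have [a_eq|jump] := eqVneq (a k.+1) (a k).
  rewrite a_eq !dotvZl !dotvZr !mulrA -expr2.
  have := ler_wpM2l (sqr_ge0 (a k)^-1) (lovasz k kn); lra.
have := normv_rescaled_jump kn jump; rewrite normv_le.
have := dotvv_ge0 (c k); have := sqr_ge0 (gsmu B k k.+1).
have := mulr_ge0 (sqr_ge0 (gsmu B k k.+1)) (dotvv_ge0 (c k)); lra.
Qed.

Lemma normv_gsov_rescaled_le k l : (l <= k)%N -> (k < n)%N ->
  normv (gsov (A *m B) l) <= G k.
Proof.
move=> lk kn; have ln := leq_ltn_trans lk kn.
rewrite (gsov_mulmx A_rescales_gsov) //; apply: le_trans (normv_rescaled_le ln) _.
rewrite ler_wpM2r ?normv_ge0 // ler_eXn2l ?(lt_le_trans _ gamma_ge2) ?ltr1n //.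
Qed.

End Rescaling.

Lemma rank_col_neq0 (R : realType) d n (B : 'M[R]_(d, n)) (k : 'I_n) :
  \rank B = n -> col k B != 0.
Proof.
move=> rank_B; apply: contra_eqN rank_B => /eqP col_k0.
have : (delta_mx 0 k : 'rV[R]_n) *m B^T = 0.
  by rewrite -trmx_delta -trmx_mul -colE col_k0 trmx0.
have ek_neq0 : delta_mx 0 k != 0 :> 'rV[R]_n.
  by apply/eqP => /matrixP/(_ 0 k)/eqP; rewrite !mxE !eqxx oner_eq0.
move=> /sub_kermxP/mxrankS; rewrite mxrank_ker mxrank_tr rank_rV ek_neq0 subn_gt0.
by move/ltn_eqF ->.
Qed.

Theorem mainTheorem13 (R : realType) (d n : nat) (B : 'M[rat]_(d, n))
    (gamma : R) (A : 'M[R]_d) :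
  let B1 : 'M[R]_(d, n) := map_mx (fun q : rat => ratr q) B in
  \rank B1 = n ->
  LLL_reduced B1 ->
  2 <= gamma ->
  is_A_map B1 gamma A ->
  let B2 := A *m B1 in
  LLL_reduced B2 /\
  (forall (i : 'I_n) (i0 : 'I_n), val i0 = 0%N ->
     normv (col i0 B2) / 2 ^+ n <= normv (gso B2 i) /\
     normv (gso B2 i) <= normv (col i B2) /\
     normv (col i B2) <= (2 * gamma) ^+ i.+1 * normv (col i0 B2)).
Proof.
move=> B1 rank_B1 B1_LLL gamma_ge2 A_rescales B2.
have [n0|n_gt0] := posnP n.
  split=> [|i]; last by have := ltn_ord i; rewrite [X in (_ < X)%N]n0.
  by apply/LLL_reducedE; split=> [i j _|k]; rewrite [X in (_ < X)%N -> _]n0.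
have b0_neq0 : colv B1 0 != 0 by rewrite -[0%N]/(val (Ordinal n_gt0)) colvE rank_col_neq0.
have B2_LLL := LLL_reduced_rescaled b0_neq0 gamma_ge2 A_rescales B1_LLL.
split=> // i i0 i0_eq0; have i_lt := ltn_ord i.
have b20 : col i0 B2 = colv B1 0 by rewrite -colvE i0_eq0 (colv_rescaled0 A_rescales).
rewrite b20 -colvE; split; last split.
- by rewrite -(colv_rescaled0 A_rescales) ?LLL_normv_gsov_ge.
- exact: normv_gsov_le.
- rewrite exprMn -mulrA; apply: LLL_normv_colv_le => // l li.
  exact: normv_gsov_rescaled_le.
Qed.
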